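(* Let $A,B\in\mathbb{Z}$ with $4A^3+27B^2\ne0$, let $M$ be a positive integer with $\max\{10\sqrt{|A|},5\sqrt[3]{|B|}\}\le M$, let $D$ be a squarefree positive integer and $E_D: y^2=x^3+D^2Ax+D^3B$. Let $P\in E_D(\mathbb{Q})$ with $MD\le x(P)$. Then \[0.01\,x(P)\le x(3P)\le 0.27\,x(P).\] *)

From mathcomp Require Import all_boot all_order all_algebra.
Set Implicit Arguments. Unset Strict Implicit. Unset Printing Implicit Defensive.
Import Order.TTheory GRing.Theory Num.Theory.
Local Open Scope ring_scope.

Definition squarefree (n : nat) : Prop :=
  forall p : nat, prime p -> ~~ (p * p %| n)%N.

(* Rational points of the Weierstrass curve y^2 = x^3 + a x + b:
   None is the point at infinity O, Some (x, y) an affine point. *)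
Definition ec_point := option (rat * rat).

Definition on_curve (a b : rat) (P : ec_point) : Prop :=
  match P with
  | None => True
  | Some (x, y) => y ^+ 2 = x ^+ 3 + a * x + b
  end.

Definition ec_add (a : rat) (P Q : ec_point) : ec_point :=
  match P, Q with
  | None, _ => Q
  | _, None => P
  | Some (x1, y1), Some (x2, y2) =>
      if x1 == x2 then
        if y1 == - y2 then None
        else
          let l := (3 * x1 ^+ 2 + a) / (2 * y1) in
          let x3 := l ^+ 2 - x1 - x2 in
          Some (x3, l * (x1 - x3) - y1)
      else
        let l := (y2 - y1) / (x2 - x1) in
        let x3 := l ^+ 2 - x1 - x2 in
        Some (x3, l * (x1 - x3) - y1)
  end.

Definition ec_triple (a : rat) (P : ec_point) : ec_point :=
  ec_add a (ec_add a P P) P.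

From mathcomp Require Import all_boot all_order all_algebra.
From mathcomp Require Import lra ring.
Import Order.TTheory GRing.Theory Num.Theory.
Local Open Scope ring_scope.

(* Normalize the coefficients by the size of x: with s = a/x^2 and r = b/x^3
   one has y^2 = x^3 (1 + s + r), and the chord-and-tangent formulas give
     x - x(2P) = x E / (4 (1 + s + r)),    x(3P) = x N / E^2,
   where E = doubling_gap s r and N = tripling_num s r are polynomials in s, r.
   The hypotheses M D <= x, 100|A| <= M^2 and 125|B| <= M^3 force
   |s| <= 1/100 and |r| <= 1/125; near s = r = 0 we have E ~ 3 and N ~ 1, and
   bounding every monomial of degree >= 2 shows 1/100 <= N/E^2 <= 27/100. *)

Definition curve_ratio {R : pzRingType} (s r : R) : R := 1 + s + r.

Definition doubling_gap {R : pzRingType} (s r : R) : R :=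
  12 * curve_ratio s r - (3 + s) ^+ 2.

Definition tripling_num {R : pzRingType} (s r : R) : R :=
  doubling_gap s r ^+ 2 + 64 * curve_ratio s r ^+ 3
  - 8 * (3 + s) * curve_ratio s r * doubling_gap s r.

Section SmallCoefficients.
Context {R : realFieldType}.

Lemma normM_le {u v cu cv : R} :
  `|u| <= cu -> `|v| <= cv -> `|u * v| <= cu * cv.
Proof. by move=> hu hv; rewrite normrM ler_pM ?normr_ge0. Qed.

Lemma norm_scaled_le {c d m u x : R} {n : nat} :
  0 < c -> 0 <= d -> c * `|u| <= m ^+ n -> 0 < m * d <= x ->
  `|d ^+ n * u / x ^+ n| <= c^-1.
Proof.
move=> c_gt0 d_ge0 hu /andP[md_gt0 md_le_x].
have x_gt0 : 0 < x := lt_le_trans md_gt0 md_le_x.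
rewrite !normrM normfV !normrX (ger0_norm d_ge0) (gtr0_norm x_gt0).
rewrite ler_pdivrMr ?exprn_gt0 // ler_pdivlMl // mulrCA.
apply: le_trans (ler_wpM2l (exprn_ge0 n d_ge0) hu) _.
by rewrite -exprMn mulrC lerXn2r // ?nnegrE ltW // (lt_le_trans md_gt0).
Qed.

Lemma tripling_ratio_bounds {s r : R} : `|s| <= 100^-1 -> `|r| <= 125^-1 ->
  [/\ 0 < curve_ratio s r, 0 < doubling_gap s r &
      100^-1 <= tripling_num s r / doubling_gap s r ^+ 2 <= 27 / 100].
Proof.
move=> hs hr.
have ss := normM_le hs hs; have sr := normM_le hs hr; have rr := normM_le hr hr.
have sss := normM_le ss hs; have ssr := normM_le ss hr; have srr := normM_le sr hr.
have rrr := normM_le rr hr; have sssr := normM_le sss hr; have ssss := normM_le sss hs.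
move: hs hr ss sr rr sss ssr srr rrr sssr ssss; rewrite !ler_norml.
do 11 case/andP=> ? ?.
have q_gt0 : 0 < curve_ratio s r by rewrite /curve_ratio; lra.
have E_gt0 : 0 < doubling_gap s r by rewrite /doubling_gap /curve_ratio; lra.
have E2_gt0 : 0 < doubling_gap s r ^+ 2 by rewrite exprn_gt0.
split=> //; rewrite ler_pdivlMr // ler_pdivrMr //.
by rewrite /tripling_num /doubling_gap /curve_ratio; apply/andP; split; lra.
Qed.

End SmallCoefficients.

Lemma ec_triple_x {a b x y : rat} :
  let s := a / x ^+ 2 in let r := b / x ^+ 3 in
  x != 0 -> curve_ratio s r != 0 -> doubling_gap s r != 0 ->
  on_curve a b (Some (x, y)) ->
  exists y3, ec_triple a (Some (x, y)) =
             Some (x * tripling_num s r / doubling_gap s r ^+ 2, y3).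
Proof.
move=> s r x_neq0 q_neq0 E_neq0 /= on_ab.
have y2E : y ^+ 2 = x ^+ 3 * curve_ratio s r.
  by rewrite on_ab /curve_ratio /s /r; field.
have y_neq0 : y != 0.
  apply: contraNneq (mulf_neq0 (expf_neq0 3 x_neq0) q_neq0) => y0.
  by rewrite -y2E y0 expr0n.
have yNy : (y == - y) = false.
  by apply: contraNF y_neq0 => /eqP h; apply/eqP; lra.
set l := (3 * x ^+ 2 + a) / (2 * y).
have ylE : y * l = x ^+ 2 * (3 + s) / 2.
  by rewrite /l /s; field; rewrite x_neq0 y_neq0.
have l2E : l ^+ 2 = x * (3 + s) ^+ 2 / (4 * curve_ratio s r).
  have -> : l ^+ 2 = (y * l) ^+ 2 / y ^+ 2 by field; rewrite y_neq0.
  by rewrite ylE y2E; field; rewrite x_neq0 q_neq0.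
have gapE : x - (l ^+ 2 - x - x) = x * doubling_gap s r / (4 * curve_ratio s r).
  by rewrite l2E /doubling_gap; field; rewrite q_neq0.
have gap_neq0 : x - (l ^+ 2 - x - x) != 0.
  by rewrite gapE !mulf_neq0 ?invr_eq0 ?mulf_neq0.
have x2_neq_x : (l ^+ 2 - x - x == x) = false.
  by apply: contraNF gap_neq0; rewrite subr_eq0 eq_sym.
have chord_x d : d != 0 ->
    ((y - (l * d - y)) / d) ^+ 2 - (l ^+ 2 - x - x) - x
    = (4 * y ^+ 2 - 4 * (y * l) * d) / d ^+ 2 + x.
  by move=> d_neq0; field.
rewrite /ec_triple /ec_add eqxx yNy /= x2_neq_x.
eexists; congr (Some (_, _)).
rewrite -/l chord_x // y2E ylE gapE /tripling_num.
by field; rewrite x_neq0 q_neq0 E_neq0.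
Qed.

Theorem lemma3p8 (A B : int) (M D : nat) (x y : rat) :
  4 * A ^+ 3 + 27 * B ^+ 2 != 0 ->
  (0 < M)%N ->
  (* max{10 sqrt|A|, 5 cbrt|B|} <= M, i.e. 100|A| <= M^2 and 125|B| <= M^3 *)
  100 * `|A| <= (M ^ 2)%:Z ->
  125 * `|B| <= (M ^ 3)%:Z ->
  (0 < D)%N -> squarefree D ->
  on_curve ((D ^ 2)%:R * A%:~R) ((D ^ 3)%:R * B%:~R) (Some (x, y)) ->
  (M * D)%:R <= x ->
  exists x3 y3 : rat,
    ec_triple ((D ^ 2)%:R * A%:~R) (Some (x, y)) = Some (x3, y3) /\
    x / 100 <= x3 <= 27 * x / 100.
Proof.
move=> _ M_gt0 hA hB D_gt0 _ on_ED; rewrite natrM => MD_le_x.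
have MD_gt0 : 0 < (M%:R : rat) * D%:R by rewrite -natrM ltr0n muln_gt0 M_gt0.
have x_gt0 : 0 < x := lt_le_trans MD_gt0 MD_le_x.
have A_bound : 100 * `|A%:~R : rat| <= M%:R ^+ 2.
  by move: hA; rewrite -(ler_int rat) -intr_norm intrM -natrX.
have B_bound : 125 * `|B%:~R : rat| <= M%:R ^+ 3.
  by move: hB; rewrite -(ler_int rat) -intr_norm intrM -natrX.
have s_small : `|(D ^ 2)%:R * A%:~R / x ^+ 2| <= 100^-1.
  rewrite natrX; apply: norm_scaled_le _ (ler0n _ D) A_bound _.
    by rewrite ltr0n.
  by rewrite MD_gt0 MD_le_x.
have r_small : `|(D ^ 3)%:R * B%:~R / x ^+ 3| <= 125^-1.
  rewrite natrX; apply: norm_scaled_le _ (ler0n _ D) B_bound _.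
    by rewrite ltr0n.
  by rewrite MD_gt0 MD_le_x.
have [q_gt0 E_gt0 /andP[ratio_lo ratio_hi]] := tripling_ratio_bounds s_small r_small.
have [y3 ->] := ec_triple_x (lt0r_neq0 x_gt0) (lt0r_neq0 q_gt0) (lt0r_neq0 E_gt0) on_ED.
eexists; exists y3; split; first by [].
rewrite -mulrA; move: (tripling_num _ _ / _) ratio_lo ratio_hi => t t_lo t_hi.
by apply/andP; split; nra.
Qed.
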